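(* Let $k\ge 3$ and let $w$ be a word over $\{a,b\}$. Suppose an occurrence of $v=b^{k-1}a$ and an occurrence of $u=ba^{k-1}$ in $w$ are consecutive and overlap (the occurrence of $v$ first; necessarily the last two letters of $v$ coincide with the first two letters of $u$, giving the factor $b^{k-1}a^{k-1}$). Let $F_v,F_u\subseteq\{0,\dots,k-1\}$ be the corresponding sets of forbidden local positions. Then $$F_v\subseteq\{(j-2)\bmod k\mid j\in F_u\}\cup\{0\}.$$
   Context: $\Sigma=\{a,b\}$. For $k\ge 3$, $S_k=\left(\Sigma^k\setminus\{ba^{k-1},b^{k-1}a\}\right)\cup\left(\Sigma^{k-1}\setminus\{a^{k-1},b^{k-1}\}\right)$, $u=ba^{k-1}$, $v=b^{k-1}a$. $\mathit{Pref}(S^* )$ denotes the set of all prefixes of words in $S^*$. For $w=w_1\cdots w_n$, $w[i..j]=w_i\cdots w_j$ (empty if $i>j$). A position $j$, $0\le j\le n-1$, is forbidden in $w$ if $w[j+1..n]\notin\mathit{Pref}(S_k^* )$. An occurrence of $p\in\{u,v\}$ in $w$ is an index $s$ with $w[s+1..s+k]=p$; local position $i\in\{0,\dots,k-1\}$ of the occurrence is the position $s+i$ of $w$, and it is forbidden in the occurrence if $s+i$ is forbidden in $w$. Two occurrences of words from $\{u,v\}$ starting at $s<t$ overlap if $t<s+k$; they are consecutive if either they overlap or they are the only occurrences of $u$ or $v$ lying inside the factor $w[s+1..t+k]$. *)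

(* Words over {a,b} are encoded as seq bool with a = false, b = true. *)
From mathcomp Require Import all_boot.
Set Implicit Arguments. Unset Strict Implicit. Unset Printing Implicit Defensive.

Definition la : bool := false.
Definition lb : bool := true.

Definition uw (k : nat) : seq bool := lb :: nseq k.-1 la.
Definition vw (k : nat) : seq bool := rcons (nseq k.-1 lb) la.

Definition inS (k : nat) (x : seq bool) : bool :=
  [&& size x == k, x != uw k & x != vw k]
  || [&& size x == k.-1, x != nseq k.-1 la & x != nseq k.-1 lb].

Definition inSstar (k : nat) (y : seq bool) : Prop :=
  exists ws : seq (seq bool), all (inS k) ws /\ flatten ws = y.

Definition inPref (k : nat) (x : seq bool) : Prop :=
  exists z : seq bool, inSstar k (x ++ z).

(* position j (0 <= j <= n-1) is forbidden in w : w[j+1..n] = drop j w not in Pref(S_k-star ) *)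
Definition forbidden (k : nat) (w : seq bool) (j : nat) : Prop :=
  j < size w /\ ~ inPref k (drop j w).

Definition occurs_at (w p : seq bool) (s : nat) : bool :=
  (s + size p <= size w) && (take (size p) (drop s w) == p).

Definition occ_uv (k : nat) (w : seq bool) (s : nat) : bool :=
  occurs_at w (uw k) s || occurs_at w (vw k) s.

Definition overlap (k s t : nat) : Prop := s < t /\ t < s + k.

Definition consecutive (k : nat) (w : seq bool) (s t : nat) : Prop :=
  s < t /\
  (overlap k s t \/
   (forall r, s <= r -> r + k <= t + k -> occ_uv k w r -> r = s \/ r = t)).

From mathcomp Require Import all_boot.
From mathcomp Require Import zify.

(* If an occurrence of v = b^{k-1}a at s overlaps an occurrence
   of u = ba^{k-1} at t > s, comparing letters forces t = s + k - 2, so the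
   two occurrences glue into the factor b^{k-1}a^{k-1} starting at s.  Let i
   be a nonzero forbidden local position of v.
   - If i >= k - 2, the position s + i already lies in the occurrence of u,
     at local position i + 2 - k.
   - If 0 < i < k - 2, the factor of length k starting at s + i is
     b^{k-1-i}a^{i+1}, which has at least two b's and two a's and hence
     belongs to S_k.  Prepending a word of S_k preserves membership in
     Pref(S_k^* ), so forbiddenness propagates from s + i + k = t + (i + 2)
     back to s + i; contrapositively s + i forbidden makes t + (i + 2)
     forbidden. *)

Lemma occurs_at_drop {w p : seq bool} {s : nat} :
  occurs_at w p s -> drop s w = p ++ drop (s + size p) w.
Proof.
case/andP=> _ /eqP hp; rewrite addnC -drop_drop.
by rewrite -{1}[drop s w](cat_take_drop (size p)) hp.
Qed.

Lemma occurs_at_nth {w p : seq bool} {s m : nat} :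
  occurs_at w p s -> m < size p -> nth false w (s + m) = nth false p m.
Proof. by move=> /occurs_at_drop hp hm; rewrite -nth_drop hp nth_cat hm. Qed.

Lemma drop_glue {w x y z r1 r2 : seq bool} {s : nat} :
  drop s w = x ++ y ++ r1 -> drop (s + size x) w = y ++ z ++ r2 ->
  drop s w = x ++ y ++ z ++ r2.
Proof.
move=> h1 h2; suff hr : r1 = z ++ r2 by rewrite h1 hr.
have : y ++ r1 = y ++ z ++ r2 by rewrite -h2 addnC -drop_drop h1 drop_size_cat.
by move/(congr1 (drop (size y))); rewrite !drop_size_cat.
Qed.

Lemma drop_block {w r : seq bool} {s m p q n : nat} :
  drop s w = nseq (m + p) lb ++ nseq (q + n) la ++ r ->
  drop (s + m) w = (nseq p lb ++ nseq q la) ++ nseq n la ++ r.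
Proof.
move=> h; rewrite addnC -drop_drop h nseqD -catA drop_size_cat ?size_nseq //.
by rewrite nseqD !catA.
Qed.

Lemma nth_uw (k m : nat) : nth false (uw k) m = (m == 0).
Proof. by case: m => [|m] //=; rewrite nth_nseq; case: ifP. Qed.

Lemma nth_vw (k m : nat) : nth false (vw k) m = (m < k.-1).
Proof.
rewrite /vw nth_rcons size_nseq; case: ifP => h; first by rewrite nth_nseq h.
by case: (m == _).
Qed.

Lemma size_uw (k : nat) : size (uw k) = k.-1.+1.
Proof. by rewrite /= size_nseq. Qed.

Lemma size_vw (k : nat) : size (vw k) = k.-1.+1.
Proof. by rewrite size_rcons size_nseq. Qed.

Lemma uw_split (n : nat) : uw n.+2 = [:: lb; la] ++ nseq n la.
Proof. by []. Qed.

Lemma vw_split (n : nat) : vw n.+2 = nseq n lb ++ [:: lb; la].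
Proof. by rewrite /vw -cats1 (_ : n.+2.-1 = n + 1) ?nseqD -?catA ?addn1. Qed.

Lemma inS_block (p q : nat) :
  2 <= p -> 2 <= q -> inS (p + q) (nseq p lb ++ nseq q la).
Proof.
move=> hp hq; apply/orP; left; apply/and3P; split.
- by rewrite size_cat !size_nseq.
- apply/eqP => /(congr1 (nth false ^~ 1)).
  by rewrite nth_uw nth_cat size_nseq hp nth_nseq hp.
- apply/eqP => /(congr1 (nth false ^~ (p + q - 2))).
  rewrite nth_vw nth_cat size_nseq ifF; last lia.
  by rewrite nth_nseq if_same => /esym /negbT /negP; apply; lia.
Qed.

Lemma inPref_cat {k : nat} {y x : seq bool} :
  inS k y -> inPref k x -> inPref k (y ++ x).
Proof.
move=> hy [z [ws [hws hflat]]]; exists z, (y :: ws).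
by rewrite /= hy hws hflat catA.
Qed.

Lemma inPref_nil (k : nat) : inPref k [::].
Proof. by exists [::], [::]. Qed.

Lemma forbidden_across {k : nat} {w y x : seq bool} {j : nat} :
  drop j w = y ++ x -> inS k y -> forbidden k w j -> forbidden k w (j + size y).
Proof.
move=> hsplit hy [_ hnot].
have hx : drop (j + size y) w = x by rewrite addnC -drop_drop hsplit drop_size_cat.
split; last by rewrite hx => /(inPref_cat hy); rewrite -hsplit.
rewrite ltnNge; apply/negP => /drop_oversize hnil.
(* otherwise w[j+1..] = y is itself a word of S_k^* *)
apply: hnot; rewrite hsplit -hx hnil cats0 -[y]cats0.
exact: inPref_cat hy (inPref_nil k).
Qed.

Lemma overlap_vu_shift {k : nat} {w : seq bool} {s t : nat} :
  3 <= k -> occurs_at w (vw k) s -> occurs_at w (uw k) t -> overlap k s t ->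
  t = s + (k - 2).
Proof.
move=> hk hv hu [hst hts].
have letter_v m : m < k -> nth false w (s + m) = (m < k.-1).
  by move=> hm; rewrite (occurs_at_nth hv) ?size_vw ?nth_vw //; lia.
have letter_u m : m < k -> nth false w (t + m) = (m == 0).
  by move=> hm; rewrite (occurs_at_nth hu) ?size_uw ?nth_uw //; lia.
have [hlt | hge] := ltnP t (s + (k - 2)).
  (* position t + 1 is a b of v but the a at local position 1 of u *)
  have := letter_v (t + 1 - s) ltac:(lia); have := letter_u 1 ltac:(lia).
  rewrite (_ : s + (t + 1 - s) = t + 1); last lia.
  by move=> -> /esym/negbT; rewrite -leqNgt; lia.
have [hgt | hle] := ltnP (s + (k - 2)) t; last lia.
(* t = s + k - 1: position t is the final a of v but the initial b of u *)
have := letter_v (t - s) ltac:(lia); have := letter_u 0 ltac:(lia).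
rewrite addn0 (_ : s + (t - s) = t); last lia.
by move=> -> /= ?; lia.
Qed.

Lemma vu_overlap_factor {k : nat} {w : seq bool} {s : nat} :
  2 <= k -> occurs_at w (vw k) s -> occurs_at w (uw k) (s + (k - 2)) ->
  exists r, drop s w = nseq (k - 1) lb ++ nseq (k - 1) la ++ r.
Proof.
case: k => [|[|n]] // _ /occurs_at_drop hv /occurs_at_drop hu.
rewrite vw_split -catA in hv.
have shift : n.+2 - 2 = size (nseq n lb) by rewrite size_nseq; lia.
rewrite uw_split -catA shift in hu.
eexists; rewrite (drop_glue hv hu) (_ : n.+2 - 1 = n + 1); last lia.
by rewrite nseqD [n + 1]addnC nseqD -!catA.
Qed.

Theorem lemma4 (k : nat) (w : seq bool) (s t : nat) :
  3 <= k ->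
  occurs_at w (vw k) s ->
  occurs_at w (uw k) t ->
  consecutive k w s t ->
  overlap k s t ->
  forall i, i < k -> forbidden k w (s + i) ->
    i = 0 \/ exists2 j, j < k & forbidden k w (t + j) /\ i = (j + k - 2) %% k.
Proof.
move=> hk hv hu _ hov i hi hforb.
have ht := overlap_vu_shift hk hv hu hov; subst t.
have [r hr] := vu_overlap_factor (ltnW hk) hv hu.
have [-> | hi0] := posnP i; [by left | right].
have [hlate | hearly] := leqP (k - 2) i.
  (* s + i already lies in the occurrence of u *)
  exists (i + 2 - k); first lia.
  rewrite (_ : s + (k - 2) + (i + 2 - k) = s + i); last lia.
  split=> //; rewrite modn_small; lia.
(* the factor b^(k-1-i) a^(i+1) at s + i lies in S_k *)
exists (i + 2); first lia.
split; last by rewrite addnAC addnK modnDr (modn_small hi).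
have split_b : i + (k - 1 - i) = k - 1 by lia.
have split_a : i + 1 + (k - 2 - i) = k - 1 by lia.
have hblock := @drop_block w r s i (k - 1 - i) (i + 1) (k - 2 - i).
rewrite split_b split_a in hblock.
have hS := @inS_block (k - 1 - i) (i + 1) ltac:(lia) ltac:(lia).
rewrite (_ : k - 1 - i + (i + 1) = k) in hS; last lia.
have := forbidden_across (hblock hr) hS hforb.
by rewrite size_cat !size_nseq (_ : s + i + _ = s + (k - 2) + (i + 2)) //; lia.
Qed.
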